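(* Let $n \ge 2$ be an integer and let $p_0 = \frac{n\log n - (n-1)\log(n-1)}{\log n}$. Then for every $1 \le p \le p_0$ we have $U(n,p) = 1$; that is, the maximum of the permanent over $n\times n$ matrices whose rows are unit vectors in $\ell_p^n$ equals $1$, the value attained by the identity matrix.
   Context: For $n\ge 1$ and $1 \le p \le \infty$, $U(n,p)$ denotes the maximum of $\mathrm{per}(A)=\sum_{\sigma\in S_n}\prod_{i=1}^n a_{i\sigma(i)}$ over all real $n\times n$ matrices $A$ each of whose rows has $\ell_p$-norm equal to $1$. *)

From HB Require Import structures.
From mathcomp Require Import all_boot all_order all_algebra all_fingroup.
From mathcomp Require Import all_classical all_reals all_analysis.
Set Implicit Arguments. Unset Strict Implicit. Unset Printing Implicit Defensive.
Import Order.TTheory GRing.Theory Num.Theory.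
Local Open Scope ring_scope.

Definition per {R : realType} {n : nat} (A : 'M[R]_n) : R :=
  \sum_(s : 'S_n) \prod_(i < n) A i (s i).

Definition lpnorm_row {R : realType} {n : nat} (p : R) (A : 'M[R]_n) (i : 'I_n) : R :=
  (\sum_(j < n) (`|A i j| `^ p)) `^ (p^-1).

Definition rows_unit_lp {R : realType} {n : nat} (p : R) (A : 'M[R]_n) : Prop :=
  forall i : 'I_n, lpnorm_row p A i = 1.

Definition is_U {R : realType} (n : nat) (p v : R) : Prop :=
  (exists A : 'M[R]_n, rows_unit_lp p A /\ per A = v) /\
  (forall A : 'M[R]_n, rows_unit_lp p A -> per A <= v).

From HB Require Import structures.
From mathcomp Require Import all_boot all_order all_algebra all_fingroup.
From mathcomp Require Import all_classical all_reals all_analysis.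
From mathcomp Require Import ring lra.
Set Implicit Arguments. Unset Strict Implicit. Unset Printing Implicit Defensive.
Import Order.TTheory GRing.Theory Num.Theory.
Local Open Scope ring_scope.

(* Replacing [A] by [|A|], it suffices to show [per B <= 1] for nonnegative
   [m x m] matrices [B] with l^p-unit rows, [m <= n], by induction on [m]; by
   homogeneity the induction hypothesis gives [per B <= prod_i |row_i B|_p] in
   size [m - 1].  For [p = 1] the Laplace expansion along a row concludes.
   For [p > 1], let [U] be the largest permanent in size [m] and suppose
   [U > 1].  Some column of [B^p] has mass at least [1]; let [a] be its largest
   entry.  Then [a^p >= 1/n], and the induction hypothesis together with AM-GM
   bounds the complementary minor by [a^(p - 1)]: this is exactly where
   [p <= p0] is used.  Expanding along the row of [a], the minors divided by
   [U] form a vector of l^s norm at most [1] ([s] the conjugate exponent), so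
   Young's inequality bounds [per B] by [U]; but the term of [a] is far from
   the equality case of Young's inequality, which yields
   [per B <= U (1 - young_defect p (1 / U) / n)] with a positive defect,
   contradicting the choice of [U]. *)

Section PowRInequalities.
Variable R : realType.
Implicit Types x y r s t : R.

Lemma powR_le_affine x t : 0 <= x -> 0 <= t <= 1 -> x `^ t <= t * x + (1 - t).
Proof.
move=> x0 /andP[t0 t1].
have [->|xn0] := eqVneq x 0.
  rewrite /powR eqxx mulr0 add0r; have [->|_] := eqVneq t 0; first by rewrite subr0.
  by rewrite subr_ge0.
have xp : 0 < x by rewrite lt_neqAle eq_sym xn0.
have := concave_ln (Itv01 t0 t1) xp ltr01.
rewrite !convRE /= ln1 mulr0 addr0 mulr1 /unstable.onem => ln_le.
have pos : 0 < t * x + (1 - t).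
  have [->|tn0] := eqVneq t 0; first by rewrite mul0r add0r subr0.
  by rewrite ltr_wpDr ?subr_ge0 // mulr_gt0 // lt_neqAle eq_sym tn0.
by rewrite /powR (negbTE xn0) -[X in _ <= X](lnK pos) ler_expR.
Qed.

Lemma powR_le1 x r : 0 <= x <= 1 -> 0 <= r -> x `^ r <= 1.
Proof.
move=> /andP[x0 x1] r0; have [->|xn0] := eqVneq x 0.
  by rewrite /powR eqxx; case: (r == 0).
by rewrite -(powRr0 x) ger_powR // lt_neqAle eq_sym xn0 x0 x1.
Qed.

Lemma powR_div x y r : 0 <= x -> 0 < y -> (x / y) `^ r = x `^ r / y `^ r.
Proof.
move=> x0 y0; have yr0 : y `^ r != 0 by rewrite gt_eqF ?powR_gt0.
apply: (mulIf yr0) => /=; rewrite divfK // -powRM ?divr_ge0 ?(ltW y0) //.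
by rewrite divfK ?lt0r_neq0.
Qed.

Lemma powRVK x r : 0 <= x -> r != 0 -> (x `^ r^-1) `^ r = x.
Proof. by move=> x0 rn0; rewrite -powRrM mulVf // powRr1. Qed.

Lemma prodr_powRl (I : finType) (P : pred I) (F : I -> R) r :
  (forall i, 0 <= F i) -> \prod_(i | P i) F i `^ r = (\prod_(i | P i) F i) `^ r.
Proof.
move=> F0; suff [] : \prod_(i | P i) F i `^ r = (\prod_(i | P i) F i) `^ r /\
                     0 <= \prod_(i | P i) F i by [].
apply: (big_ind2 (fun a b => a = b `^ r /\ 0 <= b)) => //.
- by rewrite powR1.
- by move=> a1 a2 b1 b2 [-> b10] [-> b20]; rewrite powRM ?mulr_ge0.
Qed.

(* Young's inequality for the conjugate exponents [s / (s - 1)] and [s]. *)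
Lemma powR_tangent_le m x s : 0 <= m -> 0 <= x -> 1 < s ->
  s * m `^ (s - 1) * x - (s - 1) * m `^ s <= x `^ s.
Proof.
move=> m0 x0 s1.
have s0 : 0 < s by apply: lt_trans s1.
have s10 : 0 < s - 1 by rewrite subr_gt0.
have conj : (s / (s - 1))^-1 + s^-1 = 1 by field; rewrite ?gt_eqF.
have := conjugate_powR (powR_ge0 m (s - 1)) x0 (divr_gt0 s0 s10) s0 conj.
rewrite -powRrM mulrCA divff ?gt_eqF // mulr1 => young.
have := ler_wpM2l (ltW s0) young.
have -> : s * (m `^ s / (s / (s - 1)) + x `^ s / s) = (s - 1) * m `^ s + x `^ s.
  by field; rewrite ?gt_eqF.
rewrite mulrA; lra.
Qed.

Lemma powR_tangent_gap_gt0 (v s : R) : 0 < v < 1 -> 1 < s ->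
  0 < v `^ s - s * v + (s - 1).
Proof.
move=> /andP[v0 v1] s1.
(* Compare with the tangent lines at the midpoint of [v, 1] and at 1. *)
set m := (1 + v) / 2.
have m0 : 0 < m by rewrite /m divr_gt0 // addr_gt0.
have m1 : m < 1 by rewrite /m ltr_pdivrMr // mul1r; lra.
have vm : v < m by rewrite /m ltr_pdivlMr //; lra.
set mu := m `^ (s - 1).
have tan_m := powR_tangent_le (ltW m0) (ltW v0) s1.
have tan_1 := powR_tangent_le ler01 (ltW m0) s1.
rewrite powR1 mulr1 in tan_1.
have ms : m `^ s = m * mu.
  by rewrite /mu mulr_powRB1 ?(ltW m0) //; lra.
have mu1 : mu < 1.
  rewrite /mu /powR gt_eqF // expR_lt1 pmulr_rlt0 ?subr_gt0 //.
  by rewrite ln_lt0 // m0 m1.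
rewrite ms -/mu in tan_m tan_1.
have : 0 < s * ((m - v) * (1 - mu)) by rewrite !mulr_gt0 ?subr_gt0 //; lra.
nra.
Qed.

End PowRInequalities.

Definition conjexp {R : realType} (p : R) : R := p / (p - 1).

Definition young_defect {R : realType} (p V : R) : R :=
  p^-1 - V + V `^ conjexp p / conjexp p.

Section ConjugateExponent.
Variables (R : realType) (p : R).
Hypothesis p_gt1 : 1 < p.
Local Notation s := (conjexp p).

Let p_gt0 : 0 < p := lt_trans ltr01 p_gt1.
Let p_neq0 : p != 0 := lt0r_neq0 p_gt0.
Let p1_neq0 : p - 1 != 0. Proof. by rewrite subr_eq0 gt_eqF. Qed.

Lemma conjexp_gt1 : 1 < s.
Proof. by rewrite ltr_pdivlMr ?subr_gt0 // mul1r; lra. Qed.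

Lemma conjexpV : p^-1 + s^-1 = 1.
Proof. by rewrite invf_div; field. Qed.

Lemma young_defect_gt0 V : 0 < V < 1 -> 0 < young_defect p V.
Proof.
move=> V01; have s1 := conjexp_gt1; have s0 : 0 < s by lra.
have -> : young_defect p V = (V `^ s - s * V + (s - 1)) / s.
  rewrite /young_defect -[p^-1](addrK s^-1) conjexpV; field; exact: lt0r_neq0.
by rewrite divr_gt0 // powR_tangent_gap_gt0.
Qed.

(* Young's inequality [a b <= a^p / p + b^s / s] loses at least
   [a^p * young_defect p V] when [b] is at most [V] times its optimal value
   [a^(p - 1)]. *)
Lemma young_gap a b V : 0 <= a -> 0 < V <= 1 -> 0 <= b -> b <= a `^ (p - 1) * V ->
  a * b + (1 - a `^ p) / p + (1 - b `^ s) / s <= 1 - a `^ p * young_defect p V.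
Proof.
move=> a0 /andP[V0 V1] b0 b_le.
have s1 := conjexp_gt1; have s0 : 0 < s by lra.
have exp_s1 : (p - 1) * (s - 1) = 1 by rewrite /conjexp; field.
have exp_s : (p - 1) * s = p by rewrite /conjexp; field.
set beta := a `^ (p - 1) * V; set y := a `^ p.
set w := V `^ (s - 1); set z := V `^ s.
have w1 : w <= 1 by rewrite powR_le1 ?(ltW V0) ?V1 //; lra.
have z_eq : z = V * w by rewrite /z /w mulr_powRB1 ?(ltW V0).
have beta0 : 0 <= beta by rewrite mulr_ge0 ?powR_ge0 ?(ltW V0).
have beta_s1 : beta `^ (s - 1) = a * w.
  by rewrite /beta powRM ?powR_ge0 ?(ltW V0) // -powRrM exp_s1 powRr1.
have beta_s : beta `^ s = y * z.
  by rewrite /beta powRM ?powR_ge0 ?(ltW V0) // -powRrM exp_s.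
have := powR_tangent_le beta0 b0 s1; rewrite beta_s1 beta_s => tangent.
have a_beta : a * beta = y * V by rewrite /beta mulrA mulr_powRB1.
have ab_le : a * b * (1 - w) <= y * V * (1 - w).
  by rewrite -a_beta ler_wpM2r ?subr_ge0 // ler_wpM2l.
have pV : p^-1 = 1 - s^-1 by rewrite -conjexpV addrK.
rewrite /young_defect pV -/z z_eq; rewrite z_eq in tangent.
move: tangent; set k := s^-1 => tangent.
have k0 : 0 < k by rewrite invr_gt0.
have ks : k * s = 1 by rewrite mulVf ?gt_eqF.
have := ler_wpM2l (ltW k0) tangent.
have -> : k * (s * (a * w) * b - (s - 1) * (y * (V * w))) =
          (k * s) * (a * w * b) - (k * s - k) * (y * (V * w)) by ring.
rewrite ks mul1r => {}tangent.
rewrite (mulrC _ k); lra.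
Qed.

Lemma young_sum_split (I : finType) (x y : I -> R) (j0 : I) :
  (forall j, 0 <= x j) -> (forall j, 0 <= y j) ->
  \sum_j x j `^ p = 1 -> \sum_j y j `^ s <= 1 ->
  \sum_j x j * y j <= x j0 * y j0 + (1 - x j0 `^ p) / p + (1 - y j0 `^ s) / s.
Proof.
move=> x0 y0 x_norm y_norm; have s0 : 0 < s by have := conjexp_gt1; lra.
rewrite (bigD1 j0) //= -addrA lerD2l.
apply: le_trans (_ : _ <= \sum_(j | j != j0) (x j `^ p / p + y j `^ s / s)) _.
  by apply: ler_sum => j _; apply: conjugate_powR => //; apply: conjexpV.
rewrite big_split /= -!mulr_suml; apply: lerD; rewrite ler_pM2r ?invr_gt0 //.
- by move: x_norm; rewrite (bigD1 j0) //= => <-; rewrite addrC addrK.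
- by move: y_norm; rewrite (bigD1 j0) //=; lra.
Qed.

Lemma lp_dual_norm_attained (I : finType) (c : I -> R) :
  (forall j, 0 <= c j) -> 0 < \sum_j c j `^ s ->
  exists x : I -> R, [/\ forall j, 0 <= x j, \sum_j x j `^ p = 1 &
    \sum_j x j * c j = (\sum_j c j `^ s) `^ s^-1].
Proof.
move=> c0; set Ks := \sum_j c j `^ s => Ks0; set K := Ks `^ s^-1.
have s1 := conjexp_gt1; have s0 : 0 < s by lra.
have K0 : 0 < K by apply: powR_gt0.
have K_s : K `^ s = Ks by rewrite powRVK ?(ltW Ks0) ?gt_eqF.
have cK_s j : (c j / K) `^ s = c j `^ s / Ks by rewrite powR_div // K_s.
have s1p : (s - 1) * p = s by rewrite /conjexp; field.
exists (fun j => (c j / K) `^ (s - 1)); split; first by move=> j; apply: powR_ge0.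
  under eq_bigr => j _ do rewrite -powRrM s1p cK_s.
  by rewrite -mulr_suml divff ?gt_eqF.
have term j : (c j / K) `^ (s - 1) * c j = K * (c j `^ s / Ks).
  rewrite [X in _ * X = _](_ : c j = K * (c j / K)); last by rewrite mulrC divfK ?gt_eqF.
  by rewrite mulrCA (mulrC _ (c j / K)) mulr_powRB1 ?divr_ge0 ?(ltW K0) // cK_s.
under eq_bigr => j _ do rewrite term.
by rewrite -mulr_sumr -mulr_suml divff ?mulr1 ?gt_eqF.
Qed.

End ConjugateExponent.

Definition pthreshold {R : realType} (n : nat) : R :=
  (n%:R * ln (n%:R : R) - (n%:R - 1) * ln (n%:R - 1 : R)) / ln (n%:R : R).

Section Threshold.
Variable R : realType.

Lemma shifted_mean_le_expR (N t : R) : 2 <= N -> 0 <= t <= 1 ->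
  (N - 2 + expR (- (t * ln N))) / (N - 1) <= expR (t * (ln (N - 1) - ln N)).
Proof.
move=> N2 t01; set L1 := ln N; set L2 := ln (N - 1).
have N0 : 0 < N by lra.
have N1 : 0 < N - 1 by lra.
(* Concavity of [x |-> x^t] at [N / (N - 1)] and at [1 / (N - 1)]; the weights
   [(N - 2) / (N - 1)] and [1 / (N - 1)] make the affine bounds sum to [1]. *)
have up : expR (t * (L1 - L2)) <= t * (N / (N - 1)) + (1 - t).
  have := powR_le_affine (ltW (divr_gt0 N0 N1)) t01.
  by rewrite /powR gt_eqF ?divr_gt0 // ln_div ?posrE.
have iN1 : 0 < (N - 1)^-1 by rewrite invr_gt0.
have down : expR (t * - L2) <= t * (N - 1)^-1 + (1 - t).
  have := powR_le_affine (ltW iN1) t01.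
  by rewrite /powR gt_eqF // lnV ?posrE.
have convex_comb : (N - 2) / (N - 1) * expR (t * (L1 - L2)) +
                   (N - 1)^-1 * expR (t * - L2) <= 1.
  have w0 : 0 <= (N - 2) / (N - 1) by rewrite divr_ge0 //; lra.
  apply: le_trans (lerD (ler_wpM2l w0 up) (ler_wpM2l (ltW iN1) down)) _.
  by rewrite [leLHS](_ : _ = 1) //; field; rewrite gt_eqF.
set E := expR (t * (L2 - L1)).
have E0 : 0 < E by apply: expR_gt0.
have eA : expR (t * (L1 - L2)) * E = 1 by rewrite -expRD -mulrDr subrKA subrr mulr0 expR0.
have eB : expR (t * - L2) * E = expR (- (t * L1)).
  by rewrite -expRD; congr expR; ring.
have := ler_wpM2r (ltW E0) convex_comb.
rewrite mul1r mulrDl -!mulrA eA eB mulr1; apply: le_trans.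
by rewrite [leRHS](_ : _ = (N - 2 + expR (- (t * L1))) / (N - 1)) //; field; rewrite gt_eqF.
Qed.

Lemma mean_le_powR_pthreshold (n : nat) (p M : R) : (2 <= n)%N ->
  p <= pthreshold n -> n%:R^-1 <= M <= 1 ->
  ((n%:R - 2 + M) / (n%:R - 1)) ^+ (n - 1) <= M `^ (p - 1).
Proof.
rewrite /pthreshold => n2; set N : R := n%:R; set L1 := ln N; set L2 := ln (N - 1).
move=> p_le /andP[M_lo M_hi].
have N2 : 2 <= N by rewrite /N (ler_nat R 2 n).
have L1_gt0 : 0 < L1 by rewrite /L1 ln_gt0 //; lra.
have M0 : 0 < M by apply: lt_le_trans M_lo; rewrite invr_gt0; lra.
set r0 := (N * L1 - (N - 1) * L2) / L1 - 1.
have r0_L1 : r0 * L1 = (N - 1) * (L1 - L2) by rewrite /r0; field; rewrite gt_eqF.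
apply: le_trans (_ : _ <= M `^ r0) _; last by apply: ger_powR; [rewrite M0 M_hi | rewrite /r0; lra].
(* Write [M = N^(-t)] with [0 <= t <= 1]. *)
set t := - ln M / L1.
have lnM : ln M = - (t * L1) by rewrite /t; field; rewrite gt_eqF.
have t0 : 0 <= t by rewrite /t divr_ge0 ?oppr_ge0 ?ln_le0 // (ltW L1_gt0).
have t1 : t <= 1.
  have : ln N^-1 <= ln M by rewrite ler_ln // posrE invr_gt0; lra.
  by rewrite lnV ?posrE -/L1; [rewrite /t ler_pdivrMr // mul1r; lra | lra].
set X := (N - 2 + M) / (N - 1).
have X0 : 0 < X by rewrite /X divr_gt0 //; lra.
have lnX : ln X <= t * (L2 - L1).
  rewrite -(expRK (t * (L2 - L1))) ler_ln ?posrE ?expR_gt0 //.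
  by rewrite /X -(lnK M0) lnM shifted_mean_le_expR ?t0 ?t1.
rewrite /powR gt_eqF // -(lnK (exprn_gt0 (n - 1) X0)) ler_expR lnXn //.
rewrite lnM -mulr_natl natrB ?(leq_trans _ n2) // -/N.
have -> : r0 * - (t * L1) = (N - 1) * (t * (L2 - L1)) by rewrite mulrN mulrCA r0_L1; ring.
by rewrite ler_wpM2l //; lra.
Qed.

Lemma prod_le_mean_powX_pad (m k : nat) (F : 'I_m -> R) : (m <= k)%N ->
  (forall i, 0 <= F i) -> \prod_i F i <= ((\sum_i F i + (k - m)%:R) / k%:R) ^+ k.
Proof.
move=> mk F0.
pose G (x : 'I_m + 'I_(k - m)) := if x is inl i then F i else 1.
pose A : {pred 'I_m + 'I_(k - m)} := predT.
have G0 : {in A, forall x, 0 <= G x} by move=> [i|i] _ //=; apply: F0.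
have := Order.le_of_leif (leif_AGM G0).
have -> : #|A| = k by rewrite cardT -cardE card_sum !card_ord subnKC.
rewrite !big_sumType /= [X in _ * X <= _]big1_eq mulr1 sumr_const card_ord.
by rewrite -[X in _ + X]mulr_natr mul1r.
Qed.

Lemma invn_le_max (I : finType) (z : I -> R) (i0 : I) (n : nat) :
  (0 < n)%N -> (#|I| <= n)%N -> 1 <= \sum_i z i -> (forall i, z i <= z i0) ->
  n%:R^-1 <= z i0.
Proof.
move=> n0 In z_ge z_max.
have sum_le : 1 <= z i0 *+ #|I|.
  by apply: le_trans z_ge _; rewrite -sumr_const; apply: ler_sum => i _.
have I0 : (0 < #|I|)%N by apply/card_gt0P; exists i0.
have z0 : 0 <= z i0 by rewrite -(pmulrn_lge0 _ I0); apply: le_trans sum_le.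
rewrite -[leLHS]mul1r ler_pdivrMr ?ltr0n // mulr_natr.
exact: le_trans sum_le (ler_wpMn2l z0 In).
Qed.

Lemma prod_lift_subr_le_powR (n m : nat) (p : R) (z : 'I_m.+1 -> R) (i0 : 'I_m.+1) :
  (2 <= n)%N -> (m.+1 <= n)%N -> p <= pthreshold n ->
  (forall k, 0 <= z k <= 1) -> 1 <= \sum_k z k -> (forall k, z k <= z i0) ->
  \prod_(k < m) (1 - z (lift i0 k)) <= z i0 `^ (p - 1).
Proof.
move=> n2 mn p_le z01 z_ge z_max.
have n0 : (0 < n)%N := ltnW n2.
have M_lo : n%:R^-1 <= z i0 by apply: invn_le_max; rewrite ?card_ord.
have M01 : n%:R^-1 <= z i0 <= 1 by rewrite M_lo; case/andP: (z01 i0).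
apply: le_trans (mean_le_powR_pthreshold n2 p_le M01).
have mn1 : (m <= n - 1)%N by rewrite leq_subRL.
have F0 k : 0 <= 1 - z (lift i0 k) by rewrite subr_ge0; case/andP: (z01 (lift i0 k)).
apply: le_trans (prod_le_mean_powX_pad mn1 F0) _.
have sum_lift : \sum_(k < m) z (lift i0 k) = \sum_k z k - z i0.
  by rewrite (bigD1_ord i0) //= addrC addrK.
have N2 : 2 <= n%:R :> R by rewrite (ler_nat R 2 n).
have z0 : 0 <= z i0 by case/andP: (z01 i0).
have n1_gt0 : 0 < n%:R - 1 :> R by lra.
have n1 : (n - 1)%:R = n%:R - 1 :> R by rewrite natrB.
have nm : (n - 1 - m)%:R = n%:R - 1 - m%:R :> R by rewrite !natrB.
apply: lerXn2r.
- by rewrite nnegrE divr_ge0 ?addr_ge0 ?sumr_ge0.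
- by rewrite nnegrE divr_ge0 //; lra.
rewrite n1 ler_pM2r ?invr_gt0 //.
rewrite sumrB sumr_const card_ord sum_lift nm; lra.
Qed.

End Threshold.

Section Permanent.
Variable R : realType.

(* The reindexing is the one of [expand_cofactor] for determinants. *)
Lemma expand_per_row m (B : 'M[R]_m.+1) (i : 'I_m.+1) :
  per B = \sum_j B i j * per (row' i (col' j B)).
Proof.
rewrite /per (partition_big (fun s : 'S_m.+1 => s i) predT) //=.
apply: eq_bigr => j _; rewrite big_distrr /=.
rewrite (reindex (lift_perm i j)) /=; last first.
  pose ulsf i1 (s : 'S_m.+1) k := odflt k (unlift (s i1) (s (lift i1 k))).
  have ulsfK i1 (s : 'S_m.+1) k : lift (s i1) (ulsf i1 s k) = s (lift i1 k).
    rewrite /ulsf; have:= neq_lift i1 k.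
    by rewrite -(can_eq (permK s)) => /unlift_some[] ? ? ->.
  have inj_ulsf : injective (ulsf i _).
    move=> s; apply: can_inj (ulsf (s i) s^-1%g) _ => k'.
    by rewrite {1}/ulsf ulsfK !permK liftK.
  exists (fun s => perm (inj_ulsf s)) => [s _ | s].
    by apply/permP=> k'; rewrite permE /ulsf lift_perm_lift lift_perm_id liftK.
  move/(s _ =P _) => si0; apply/permP=> k.
  case: (unliftP i k) => [k'|] ->; rewrite ?lift_perm_id //.
  by rewrite lift_perm_lift -si0 permE ulsfK.
rewrite (eq_bigl predT) => [|s]; last by rewrite lift_perm_id eqxx.
apply: eq_bigr => s _.
rewrite (bigD1_ord i) //= lift_perm_id; congr (_ * _).
by apply: eq_bigr => k _; rewrite lift_perm_lift !mxE.
Qed.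

Lemma expand_per_set_row m (B : 'M[R]_m.+1) (i : 'I_m.+1) (x : 'I_m.+1 -> R) :
  per (\matrix_(k, l) if k == i then x l else B k l) =
  \sum_j x j * per (row' i (col' j B)).
Proof.
rewrite (expand_per_row _ i); apply: eq_bigr => j _; rewrite mxE eqxx.
congr (_ * per _); apply/matrixP => k l.
by rewrite !mxE eq_sym (negbTE (neq_lift i k)).
Qed.

Lemma per_ge0 m (B : 'M[R]_m) : (forall i j, 0 <= B i j) -> 0 <= per B.
Proof. by move=> B0; rewrite sumr_ge0 // => s _; rewrite prodr_ge0. Qed.

Lemma ler_norm_per m (A : 'M[R]_m) : `|per A| <= per (map_mx Num.norm A).
Proof.
apply: le_trans (ler_norm_sum _ _ _) _; apply: ler_sum => s _.
by rewrite normr_prod; under [leRHS]eq_bigr do rewrite mxE.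
Qed.

Lemma per_scale_rows m (d : 'I_m -> R) (B : 'M[R]_m) :
  per (\matrix_(i, j) (d i * B i j)) = (\prod_i d i) * per B.
Proof.
rewrite /per mulr_sumr; apply: eq_bigr => s _.
by rewrite -big_split /=; apply: eq_bigr => i _; rewrite mxE.
Qed.

Lemma per_zero_row m (B : 'M[R]_m) i : (forall j, B i j = 0) -> per B = 0.
Proof. by move=> Bi0; rewrite /per big1 // => s _; rewrite (bigD1 i) //= Bi0 mul0r. Qed.

Lemma per1 m : per (1%:M : 'M[R]_m) = 1.
Proof.
rewrite /per (bigD1 1%g) //= [X in _ + X]big1 ?addr0.
  by rewrite big1 // => i _; rewrite mxE perm1 eqxx.
move=> s /eqP s_neq1.
have [i si|fixed] := pickP (fun i => s i != i); last first.
  by case: s_neq1; apply/permP => i; rewrite perm1; move/negbFE/eqP: (fixed i).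
by rewrite (bigD1 i) //= mxE eq_sym (negbTE si) mul0r.
Qed.

Lemma per_dim0 (B : 'M[R]_0) : per B = 1.
Proof. by rewrite /per (eq_bigr (fun=> 1)) ?sumr_const ?card_Sn // => s _; rewrite big_ord0. Qed.

Lemma per_le_fact m (B : 'M[R]_m) : (forall i j, 0 <= B i j <= 1) -> per B <= m`!%:R.
Proof.
move=> B01; rewrite -[m`!]card_Sn -sumr_const; apply: ler_sum => s _.
by apply: prodr_ile1 => i _; apply: B01.
Qed.

End Permanent.

Section UnitRows.
Variables (R : realType) (p : R).
Hypothesis p_ge1 : 1 <= p.

Let p_gt0 : 0 < p := lt_le_trans ltr01 p_ge1.
Let p_neq0 : p != 0 := lt0r_neq0 p_gt0.

Definition nonneg_unit_rows m (B : 'M[R]_m) :=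
  (forall i j, 0 <= B i j) /\ (forall i, \sum_j B i j `^ p = 1).

Definition per_rownorm_bound m := forall B : 'M[R]_m, (forall i j, 0 <= B i j) ->
  per B <= \prod_i (\sum_j B i j `^ p) `^ p^-1.

Lemma nonneg_unit_rows1 m : nonneg_unit_rows (1%:M : 'M[R]_m).
Proof.
split=> [i j|i]; first by rewrite mxE ler0n.
rewrite (bigD1 i) //= big1 ?addr0 => [|j ji]; first by rewrite mxE eqxx powR1.
by rewrite mxE eq_sym (negbTE ji) powR0.
Qed.

Section Rows.
Variables (m : nat) (B : 'M[R]_m).
Hypothesis B_unit : nonneg_unit_rows B.

Lemma unit_rows_powR_le1 i j : B i j `^ p <= 1.
Proof.
case: B_unit => _ B_norm; rewrite -(B_norm i) (bigD1 j) //= lerDl.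
by rewrite sumr_ge0 // => k _; apply: powR_ge0.
Qed.

Lemma unit_rows_le1 i j : 0 <= B i j <= 1.
Proof.
rewrite B_unit.1 /= leNgt; apply/negP => B_gt1.
have := le_trans (le1r_powR (ltW B_gt1) p_ge1) (unit_rows_powR_le1 i j).
by rewrite leNgt B_gt1.
Qed.

End Rows.

Lemma unit_rows_minor_sum m (B : 'M[R]_m.+1) i0 j k : nonneg_unit_rows B ->
  \sum_l (row' i0 (col' j B)) k l `^ p = 1 - B (lift i0 k) j `^ p.
Proof.
case=> _ B_norm; rewrite -(B_norm (lift i0 k)) (bigD1_ord j) //= addrC addrK.
by apply: eq_bigr => l _; rewrite !mxE.
Qed.

Lemma per_rownorm_bound_of_unit m :
  (forall B : 'M[R]_m, nonneg_unit_rows B -> per B <= 1) -> per_rownorm_bound m.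
Proof.
move=> per_le1 B B0; set N := fun i => \sum_j B i j `^ p.
have N0 i : 0 <= N i by rewrite sumr_ge0 // => j _; apply: powR_ge0.
have [i /eqP Ni0|N_neq0] := pickP (fun i => N i == 0).
  have Bi0 j : B i j = 0.
    by apply: (@powR_eq0_eq0 _ _ p); apply: (psumr_eq0P _ Ni0) => // k _; apply: powR_ge0.
  by rewrite (per_zero_row Bi0) prodr_ge0 // => k _; apply: powR_ge0.
have N_gt0 i : 0 < N i by rewrite lt_neqAle eq_sym N_neq0 N0.
set d := fun i => N i `^ p^-1.
have d_gt0 i : 0 < d i by apply: powR_gt0.
pose B' : 'M[R]_m := \matrix_(i, j) (B i j / d i).
have eB : B = \matrix_(i, j) (d i * B' i j).
  by apply/matrixP => i j; rewrite !mxE mulrC divfK ?lt0r_neq0.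
rewrite {1}eB per_scale_rows; apply: ler_piMr; first by apply: prodr_ge0 => i _; apply: ltW (d_gt0 i).
apply: per_le1; split=> [i j|i]; first by rewrite mxE divr_ge0 ?B0 ?(ltW (d_gt0 i)).
have B'_powR j : B' i j `^ p = B i j `^ p / N i.
  by rewrite mxE powR_div // powRVK ?(ltW (N_gt0 i)).
by rewrite (eq_bigr _ (fun j _ => B'_powR j)) -mulr_suml -/(N i) divff ?lt0r_neq0.
Qed.

Lemma per_minor_le m (B : 'M[R]_m.+1) i0 j :
  per_rownorm_bound m -> nonneg_unit_rows B ->
  per (row' i0 (col' j B)) <= (\prod_k (1 - B (lift i0 k) j `^ p)) `^ p^-1.
Proof.
move=> per_bound B_unit.
apply: le_trans (per_bound _ _) _; first by move=> k l; rewrite !mxE B_unit.1.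
rewrite -prodr_powRl => [|k]; last by rewrite subr_ge0 unit_rows_powR_le1.
by under eq_bigr => k _ do rewrite unit_rows_minor_sum //.
Qed.

Lemma per_minor_le1 m (B : 'M[R]_m.+1) i0 j :
  per_rownorm_bound m -> nonneg_unit_rows B -> per (row' i0 (col' j B)) <= 1.
Proof.
move=> per_bound B_unit; apply: le_trans (per_minor_le i0 j per_bound B_unit) _.
have factor01 k : 0 <= 1 - B (lift i0 k) j `^ p <= 1.
  by rewrite subr_ge0 unit_rows_powR_le1 // gerBl powR_ge0.
apply: powR_le1; last by rewrite invr_ge0 ltW.
apply/andP; split; first by apply: prodr_ge0 => k _; case/andP: (factor01 k).
by apply: prodr_ile1 => k _; apply: factor01.
Qed.

Lemma per_unit_rows_le1_p1 m (B : 'M[R]_m.+1) : p = 1 ->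
  per_rownorm_bound m -> nonneg_unit_rows B -> per B <= 1.
Proof.
move=> p1 per_bound B_unit; have [B0 B_norm] := B_unit.
rewrite (expand_per_row _ ord0) -(B_norm ord0) p1.
apply: ler_sum => j _; rewrite powRr1 //; apply: ler_piMr => //.
exact: per_minor_le1.
Qed.

Lemma exists_heavy_entry n m (B : 'M[R]_m.+1) :
  (2 <= n)%N -> (m.+1 <= n)%N -> p <= pthreshold n ->
  per_rownorm_bound m -> nonneg_unit_rows B ->
  exists i0 j0, n%:R^-1 <= B i0 j0 `^ p /\
                per (row' i0 (col' j0 B)) <= B i0 j0 `^ (p - 1).
Proof.
move=> n2 mn p_le per_bound B_unit; have [_ B_norm] := B_unit.
set y := fun i j => B i j `^ p.
have [j0 _ j0_max] := @arg_maxP _ _ _ ord0 predT (fun j => \sum_i y i j) isT.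
have col_ge1 : 1 <= \sum_i y i j0.
  have total : \sum_j \sum_i y i j = (m.+1)%:R.
    by rewrite exchange_big /= (eq_bigr _ (fun i _ => B_norm i)) sumr_const card_ord.
  have : \sum_j \sum_i y i j <= \sum_(j < m.+1) \sum_i y i j0.
    by apply: ler_sum => j _; apply: j0_max.
  by rewrite total sumr_const card_ord ler_pMn2r.
have [i0 _ i0_max] := @arg_maxP _ _ _ ord0 predT (fun i => y i j0) isT.
have y01 i : 0 <= y i j0 <= 1 by rewrite powR_ge0 unit_rows_powR_le1.
exists i0, j0; split.
  apply: (invn_le_max (z := fun i => y i j0)); rewrite ?card_ord //.
  - exact: ltnW n2.
  - by move=> i; apply: i0_max.
apply: le_trans (per_minor_le i0 j0 per_bound B_unit) _.
have prod_le := prod_lift_subr_le_powR n2 mn p_le y01 col_ge1 (fun i => i0_max i isT).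
have prod0 : 0 <= \prod_(k < m) (1 - y (lift i0 k) j0).
  by rewrite prodr_ge0 // => k _; rewrite subr_ge0 unit_rows_powR_le1.
have p_inv0 : 0 <= p^-1 by rewrite invr_ge0 ltW.
apply: le_trans (ge0_ler_powR p_inv0 _ _ prod_le) _; rewrite ?nnegrE ?powR_ge0 //.
by rewrite /y -!powRrM mulrCA divff // mulr1.
Qed.

Section ExponentGt1.
Hypothesis p_gt1 : 1 < p.
Local Notation s := (conjexp p).

Lemma sum_minor_powR_le1 m (B : 'M[R]_m.+1) i0 U : 0 < U ->
  (forall B' : 'M[R]_m.+1, nonneg_unit_rows B' -> per B' <= U) -> nonneg_unit_rows B ->
  \sum_j (per (row' i0 (col' j B)) / U) `^ s <= 1.
Proof.
move=> U0 per_le_U B_unit; have [B0 B_norm] := B_unit.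
set c := fun j => per (row' i0 (col' j B)).
have c0 j : 0 <= c j by apply: per_ge0 => k l; rewrite !mxE.
have s0 : 0 < s by have := conjexp_gt1 p_gt1; lra.
rewrite (eq_bigr _ (fun j _ => powR_div s (c0 j) U0)) -mulr_suml.
rewrite ler_pdivrMr ?powR_gt0 // mul1r.
have [Ks_le0|Ks_gt0] := leP (\sum_j c j `^ s) 0; first exact: le_trans Ks_le0 (powR_ge0 _ _).
(* Replace row [i0] by a unit vector realizing the l^s norm of the cofactors. *)
have [x [x0 x_norm x_c]] := lp_dual_norm_attained p_gt1 c0 Ks_gt0.
pose B' : 'M[R]_m.+1 := \matrix_(k, l) if k == i0 then x l else B k l.
have B'_unit : nonneg_unit_rows B'.
  split=> [k l|k]; rewrite ?mxE; first by case: (k == i0).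
  under eq_bigr => l _ do rewrite mxE.
  by case: (k == i0); [apply: x_norm | apply: B_norm].
have := per_le_U B' B'_unit; rewrite expand_per_set_row x_c => K_le.
rewrite -(powRVK (ltW Ks_gt0) (lt0r_neq0 s0)).
apply: ge0_ler_powR K_le; first exact: ltW.
- by rewrite nnegrE powR_ge0.
- by rewrite nnegrE ltW.
Qed.

Lemma per_le_heavy_entry n m (B : 'M[R]_m.+1) i0 j0 U : 1 < U ->
  (forall B' : 'M[R]_m.+1, nonneg_unit_rows B' -> per B' <= U) -> nonneg_unit_rows B ->
  n%:R^-1 <= B i0 j0 `^ p -> per (row' i0 (col' j0 B)) <= B i0 j0 `^ (p - 1) ->
  per B <= U * (1 - young_defect p U^-1 / n%:R).
Proof.
move=> U1 per_le_U B_unit a_heavy c_small; have [B0 B_norm] := B_unit.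
have U0 : 0 < U by lra.
set b := fun j => per (row' i0 (col' j B)) / U.
have b0 j : 0 <= b j.
  by rewrite divr_ge0 ?(ltW U0) // per_ge0 // => k l; rewrite !mxE.
have V01 : 0 < U^-1 < 1 by rewrite invr_gt0 U0 invf_lt1.
have V_le1 : 0 < U^-1 <= 1 by rewrite invr_gt0 U0 invf_le1 ?ltW.
have b_le : b j0 <= B i0 j0 `^ (p - 1) * U^-1 by rewrite ler_wpM2r // invr_ge0 ltW.
have -> : per B = U * \sum_j B i0 j * b j.
  rewrite (expand_per_row _ i0) mulr_sumr; apply: eq_bigr => j _.
  by rewrite /b mulrCA [U * _]mulrC divfK ?lt0r_neq0.
rewrite ler_pM2l //.
have b_norm := sum_minor_powR_le1 i0 U0 per_le_U B_unit.
apply: le_trans (young_sum_split p_gt1 j0 (B0 i0) b0 (B_norm i0) b_norm) _.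
apply: le_trans (young_gap p_gt1 (B0 i0 j0) V_le1 (b0 j0) b_le) _.
by rewrite lerD2l lerN2 mulrC ler_pM2r // young_defect_gt0.
Qed.

End ExponentGt1.

Lemma per_unit_rows_le1_succ n m : (2 <= n)%N -> (m.+1 <= n)%N -> p <= pthreshold n ->
  per_rownorm_bound m -> forall B : 'M[R]_m.+1, nonneg_unit_rows B -> per B <= 1.
Proof.
move=> n2 mn p_le per_bound.
have [p_gt1|p_le1] := ltrP 1 p; last first.
  move=> B B_unit; apply: per_unit_rows_le1_p1 per_bound B_unit.
  by apply/le_anti; rewrite p_le1 p_ge1.
set E := [set x : R | exists B : 'M[R]_m.+1, nonneg_unit_rows B /\ per B = x]%classic.
have E_ub : has_ubound E.
  exists (m.+1)`!%:R => _ [B [B_unit <-]].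
  by apply: per_le_fact => i j; apply: unit_rows_le1.
set U := sup E.
have per_le_U (B : 'M[R]_m.+1) : nonneg_unit_rows B -> per B <= U.
  by move=> B_unit; apply: ub_le_sup E_ub _ _; exists B.
suff U_le1 : U <= 1 by move=> B B_unit; apply: le_trans (per_le_U B B_unit) U_le1.
rewrite leNgt; apply/negP => U_gt1.
have n_gt0 : 0 < n%:R :> R by rewrite ltr0n ltnW.
have defect_gt0 : 0 < young_defect p U^-1.
  by apply: young_defect_gt0; rewrite // invr_gt0 invf_lt1 ?(lt_trans ltr01 U_gt1).
have : U <= U * (1 - young_defect p U^-1 / n%:R).
  apply: ge_sup; first by exists 1, 1%:M; split; [apply: nonneg_unit_rows1 | apply: per1].
  move=> _ [B [B_unit <-]].
  have [i0 [j0 [heavy small]]] := exists_heavy_entry n2 mn p_le per_bound B_unit.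
  exact: per_le_heavy_entry U_gt1 per_le_U B_unit heavy small.
have : 0 < U * (young_defect p U^-1 / n%:R) by rewrite mulr_gt0 ?divr_gt0; lra.
rewrite mulrBr mulr1; lra.
Qed.

Lemma per_unit_rows_le1 n : (2 <= n)%N -> p <= pthreshold n ->
  forall m, (m <= n)%N -> forall B : 'M[R]_m, nonneg_unit_rows B -> per B <= 1.
Proof.
move=> n2 p_le; elim=> [|m IHm] mn B B_unit; first by rewrite per_dim0.
have per_bound := per_rownorm_bound_of_unit (IHm (ltnW mn)).
exact: per_unit_rows_le1_succ n2 mn p_le per_bound B B_unit.
Qed.

End UnitRows.

Theorem theorem1p3 (R : realType) (n : nat) (p : R) :
  (2 <= n)%N ->
  1 <= p ->
  p <= (n%:R * ln (n%:R : R) - (n%:R - 1) * ln (n%:R - 1 : R)) / ln (n%:R : R) ->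
  is_U n p 1.
Proof.
move=> n2 p_ge1; rewrite -/(pthreshold n) => p_le.
have p_neq0 : p != 0 by rewrite gt_eqF // (lt_le_trans ltr01 p_ge1).
split.
  exists 1%:M; split=> [i|]; last exact: per1.
  have [_ /(_ i) row_norm] := nonneg_unit_rows1 p_ge1 n.
  rewrite /lpnorm_row (eq_bigr (fun j => (1%:M : 'M[R]_n) i j `^ p)) => [|j _].
    by rewrite row_norm powR1.
  by rewrite ger0_norm // mxE ler0n.
move=> A A_unit.
have absA_unit : nonneg_unit_rows p (map_mx Num.norm A).
  split=> [i j|i]; first by rewrite mxE normr_ge0.
  under eq_bigr => j _ do rewrite mxE.
  have S0 : 0 <= \sum_j `|A i j| `^ p by apply: sumr_ge0 => j _; apply: powR_ge0.
  have := A_unit i; rewrite /lpnorm_row => row_norm.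
  by rewrite -(powRVK S0 p_neq0) row_norm powR1.
apply: le_trans (ler_norm (per A)) _.
exact: le_trans (ler_norm_per A) (per_unit_rows_le1 p_ge1 n2 p_le (leqnn n) absA_unit).
Qed.
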